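(* Under the hypotheses of Lemma 7 (heterogeneous agents $\dot x_i=\sum_j\alpha_{ij}(t)(\mathrm{sat}_j(x_j)-\mathrm{sat}_i(x_i))$ with $s_1>\dots>s_N>0$, time-varying undirected graph satisfying the standing assumptions, integrally connected over $[0,\infty)$, with $\alpha_{ij}(t)\in\{0\}\cup[\alpha_{\min},\alpha_{\max}]$, $0<\alpha_{\min}\le\alpha_{\max}$), for every $i\in\mathcal V$ there exists $x_i^*$ with $\lim_{t\to\infty}x_i(t)=x_i^*$, and $x_i^*\in[-s_N,s_N]$ for all $i\in\{1,\dots,N-1\}$.
   Context: $\mathrm{sat}_i(x)=\mathrm{sign}(x)\min\{|x|,s_i\}$. Standing assumptions: $\alpha_{ij}(t)=\alpha_{ji}(t)\ge0$, each $\alpha_{ij}$ continuous on $[0,\infty)$ except on a set of measure zero; Carathéodory solutions. Integral graph: adjacency $\bar\alpha_{ij}=1$ if $\int_0^\infty\alpha_{ij}(t)dt=\infty$, else $0$; integrally connected means this graph is connected. *)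

From Stdlib Require Import Reals Lra Lia.
Open Scope R_scope.

Definition sgn (x : R) : R :=
  if Rlt_dec 0 x then 1 else if Rlt_dec x 0 then -1 else 0.

Definition sat (s x : R) : R := sgn x * Rmin (Rabs x) s.

Fixpoint sumN (n : nat) (f : nat -> R) : R :=
  match n with
  | O => 0
  | S m => sumN m f + f m
  end.

Definition measure_zero (A : R -> Prop) : Prop :=
  forall eps, 0 < eps ->
    exists a b : nat -> R,
      (forall n, a n <= b n) /\
      (forall n, sumN n (fun k => b k - a k) <= eps) /\
      (forall t, A t -> exists n, a n < t < b n).

Definition ae_continuous (f : R -> R) : Prop :=
  measure_zero (fun t => 0 <= t /\ ~ continuity_pt f t).

Definition integral_infinite (f : R -> R) : Prop :=
  forall M, exists T, 0 <= T /\
    exists pr : Riemann_integrable f 0 T, M < RiemannInt pr.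

Definition integral_edge (N : nat) (alpha : nat -> nat -> R -> R) (i j : nat) : Prop :=
  (i < N)%nat /\ (j < N)%nat /\ integral_infinite (alpha i j).

Inductive connected_by (E : nat -> nat -> Prop) : nat -> nat -> Prop :=
  | cb_refl x : connected_by E x x
  | cb_step x y z : E x y -> connected_by E y z -> connected_by E x z.

Definition integrally_connected (N : nat) (alpha : nat -> nat -> R -> R) : Prop :=
  forall i j, (i < N)%nat -> (j < N)%nat -> connected_by (integral_edge N alpha) i j.

Definition rhs (N : nat) (alpha : nat -> nat -> R -> R) (s : nat -> R)
  (x : nat -> R -> R) (i : nat) (t : R) : R :=
  sumN N (fun j => alpha i j t * (sat (s j) (x j t) - sat (s i) (x i t))).

Definition caratheodory_solution (N : nat) (alpha : nat -> nat -> R -> R)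
  (s : nat -> R) (x : nat -> R -> R) : Prop :=
  forall i, (i < N)%nat -> forall t, 0 <= t ->
    exists pr : Riemann_integrable (rhs N alpha s x i) 0 t,
      RiemannInt pr = x i t - x i 0.

Definition lim_infty (f : R -> R) (l : R) : Prop :=
  forall eps, 0 < eps -> exists T, forall t, T <= t -> Rabs (f t - l) < eps.

From Stdlib Require Import Reals Lra Lia Classical.
Open Scope R_scope.

(* Write y_i = sat_{s_i}(x_i).  For a level c, the potential
   F_c(t) = sum_i int^{x_i(t)} [sat_{s_i} xi > c] dxi is nonincreasing, since by symmetry of the
   weights its derivative sum_i [y_i > c] x_i' equals
   -1/2 sum_ij alpha_ij ([y_i > c] - [y_j > c]) (y_i - y_j) <= 0.  Taking c = max_i y_i(t) shows
   that max_i y_i, and by the odd symmetry of the system also -min_i y_i, are nonincreasing, hence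
   convergent; every F_c converges as well.  If the two limits differed, the second differences
   of F_c in c, which are sums of tents in the y_i, would yield a level c strictly between them
   that the y_i eventually keep away from.  No y_i then crosses c, and along an edge (i, j) of the
   integral graph joining the two sides the quantity sum_{y_k > c} x_k decreases by at least
   2 rho int alpha_ij = oo, contradicting the boundedness of x.  Hence all y_i tend to a common c
   with |c| <= s_N, so x_i -> c for i < N, and x_N converges because sum_i x_i is conserved. *)

(** * Saturation, finite sums and maxima *)

Lemma Rabs_le_inv a b : Rabs a <= b -> - b <= a <= b.
Proof. unfold Rabs; destruct Rcase_abs; intros; lra. Qed.

Lemma sat_spec s x : 0 <= s ->
  (s < x /\ sat s x = s) \/ (x < -s /\ sat s x = -s) \/ (-s <= x <= s /\ sat s x = x).
Proof.
  intros Hs. unfold sat, sgn, Rmin.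
  destruct (Rlt_dec 0 x) as [Hx|Hx].
  - rewrite Rabs_right by lra. destruct (Rle_dec x s); [right; right | left]; split; lra.
  - destruct (Rlt_dec x 0) as [Hx'|Hx'].
    + rewrite Rabs_left by lra.
      destruct (Rle_dec (- x) s); [right; right | right; left]; split; lra.
    + assert (x = 0) as -> by lra. rewrite Rabs_R0.
      destruct (Rle_dec 0 s); right; right; split; lra.
Qed.

Ltac sat_cases s x Hs :=
  destruct (sat_spec s x Hs) as [[? ->] | [[? ->] | [? ->]]].

Lemma sat_bounds s x : 0 <= s -> - s <= sat s x <= s.
Proof. intros Hs. sat_cases s x Hs; lra. Qed.

Lemma sat_lipschitz s x x' : 0 <= s -> Rabs (sat s x - sat s x') <= Rabs (x - x').
Proof.
  intros Hs. sat_cases s x Hs; sat_cases s x' Hs;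
    unfold Rabs; repeat destruct Rcase_abs; lra.
Qed.

Lemma sat_opp s x : 0 <= s -> sat s (- x) = - sat s x.
Proof. intros Hs. sat_cases s x Hs; sat_cases s (- x) Hs; lra. Qed.

Lemma sat_fixed s x : 0 <= s -> Rabs (sat s x) < s -> sat s x = x.
Proof. intros Hs. sat_cases s x Hs; unfold Rabs; repeat destruct Rcase_abs; lra. Qed.

Lemma sumN_ext n f g : (forall k, (k < n)%nat -> f k = g k) -> sumN n f = sumN n g.
Proof.
  induction n as [|n IH]; simpl; intros H; [reflexivity|].
  rewrite IH by (intros; apply H; lia). rewrite H by lia. reflexivity.
Qed.

Lemma sumN_le n f g : (forall k, (k < n)%nat -> f k <= g k) -> sumN n f <= sumN n g.
Proof.
  induction n as [|n IH]; simpl; intros H; [lra|].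
  assert (f n <= g n) by (apply H; lia).
  assert (sumN n f <= sumN n g) by (apply IH; intros; apply H; lia). lra.
Qed.

Lemma sumN_plus n f g : sumN n (fun k => f k + g k) = sumN n f + sumN n g.
Proof. induction n as [|n IH]; simpl; [lra|]. rewrite IH. ring. Qed.

Lemma sumN_minus n f g : sumN n (fun k => f k - g k) = sumN n f - sumN n g.
Proof. induction n as [|n IH]; simpl; [lra|]. rewrite IH. ring. Qed.

Lemma sumN_scal n c f : sumN n (fun k => c * f k) = c * sumN n f.
Proof. induction n as [|n IH]; simpl; [lra|]. rewrite IH. ring. Qed.

Lemma sumN_const n c : sumN n (fun _ => c) = INR n * c.
Proof. induction n as [|n IH]; simpl sumN; [simpl; lra|]. rewrite IH, S_INR. ring. Qed.

Lemma sumN_swap n m f :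
  sumN n (fun i => sumN m (fun j => f i j)) = sumN m (fun j => sumN n (fun i => f i j)).
Proof.
  induction n as [|n IH]; simpl.
  - rewrite sumN_const. ring.
  - rewrite IH, <- sumN_plus. reflexivity.
Qed.

Lemma sumN_lower n f m : (forall k, (k < n)%nat -> m <= f k) -> INR n * m <= sumN n f.
Proof. intros H. rewrite <- sumN_const. apply sumN_le. exact H. Qed.

Lemma sumN_nonneg n f : (forall k, (k < n)%nat -> 0 <= f k) -> 0 <= sumN n f.
Proof. intros H. pose proof (sumN_lower n f 0 H). lra. Qed.

Lemma sumN_ge_term n f i :
  (forall k, (k < n)%nat -> 0 <= f k) -> (i < n)%nat -> f i <= sumN n f.
Proof.
  induction n as [|n IH]; simpl; intros H Hi; [lia|].
  assert (0 <= sumN n f) by (apply sumN_nonneg; intros; apply H; lia).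
  destruct (Nat.eq_dec i n) as [->|Hin]; [lra|].
  assert (f i <= sumN n f) by (apply IH; [intros; apply H|]; lia).
  assert (0 <= f n) by (apply H; lia). lra.
Qed.

Lemma sumN_ge_two n f i j :
  (forall k, (k < n)%nat -> 0 <= f k) -> (i < n)%nat -> (j < n)%nat -> i <> j ->
  f i + f j <= sumN n f.
Proof.
  induction n as [|n IH]; simpl; intros H Hi Hj Hij; [lia|].
  assert (Hnn : forall k, (k < n)%nat -> 0 <= f k) by (intros; apply H; lia).
  destruct (Nat.eq_dec i n) as [->|Hin]; [|destruct (Nat.eq_dec j n) as [->|Hjn]].
  - pose proof (sumN_ge_term n f j Hnn ltac:(lia)). lra.
  - pose proof (sumN_ge_term n f i Hnn ltac:(lia)). lra.
  - assert (f i + f j <= sumN n f) by (apply IH; auto; lia).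
    assert (0 <= f n) by (apply H; lia). lra.
Qed.

Lemma sumN_abs_le n f c :
  (forall k, (k < n)%nat -> Rabs (f k) <= c) -> Rabs (sumN n f) <= INR n * c.
Proof.
  induction n as [|n IH]; simpl sumN; intros H.
  - simpl. rewrite Rabs_R0. lra.
  - rewrite S_INR. eapply Rle_trans; [apply Rabs_triang|].
    assert (Rabs (f n) <= c) by (apply H; lia).
    assert (Rabs (sumN n f) <= INR n * c) by (apply IH; intros; apply H; lia). lra.
Qed.

Lemma sumN_lt_exists n f m : sumN n f < INR n * m -> exists k, (k < n)%nat /\ f k < m.
Proof.
  intros H. apply NNPP. intros Hno. apply (Rlt_not_le _ _ H), sumN_lower. intros k Hk.
  apply Rnot_lt_le. intros Hlt. apply Hno. exists k. split; assumption.
Qed.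

Lemma finite_choice (P : nat -> R -> Prop) n :
  (forall k, (k < n)%nat -> exists v, P k v) -> exists f : nat -> R, forall k, (k < n)%nat -> P k (f k).
Proof.
  induction n as [|n IH]; intros H; [exists (fun _ => 0); intros; lia|].
  destruct IH as [f Hf]; [intros; apply H; lia|]. destruct (H n ltac:(lia)) as [v Hv].
  exists (fun k => if Nat.eq_dec k n then v else f k). intros k Hk.
  destruct (Nat.eq_dec k n) as [->|Hkn]; [exact Hv | apply Hf; lia].
Qed.

Lemma symmetric_sum_identity N (a : nat -> nat -> R) (d y : nat -> R) :
  (forall i j, (i < N)%nat -> (j < N)%nat -> a i j = a j i) ->
  sumN N (fun i => d i * sumN N (fun j => a i j * (y j - y i))) =
  - / 2 * sumN N (fun i => sumN N (fun j => a i j * ((d i - d j) * (y i - y j)))).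
Proof.
  intros Ha.
  set (S := sumN N (fun i => d i * sumN N (fun j => a i j * (y j - y i)))).
  assert (E1 : S = sumN N (fun i => sumN N (fun j => a i j * (d i * (y j - y i))))).
  { apply sumN_ext. intros i Hi. rewrite <- sumN_scal. apply sumN_ext. intros; ring. }
  assert (E2 : S = sumN N (fun i => sumN N (fun j => a i j * (d j * (y i - y j))))).
  { rewrite E1, sumN_swap. apply sumN_ext. intros i Hi. apply sumN_ext. intros j Hj.
    rewrite (Ha j i) by assumption. ring. }
  assert (E3 : sumN N (fun i => sumN N (fun j => a i j * ((d i - d j) * (y i - y j))))
               = - (S + S)).
  { replace (- (S + S)) with (-1 * (S + S)) by ring.
    rewrite E1 at 1. rewrite E2, <- sumN_plus, <- sumN_scal.
    apply sumN_ext. intros i Hi. rewrite <- sumN_plus, <- sumN_scal. apply sumN_ext. intros; ring. }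
  rewrite E3. field.
Qed.

Fixpoint max_upto (n : nat) (f : nat -> R) : R :=
  match n with O => f O | S m => Rmax (max_upto m f) (f m) end.

Lemma max_upto_ge n f k : (k < n)%nat -> f k <= max_upto n f.
Proof.
  induction n as [|n IH]; simpl; intros Hk; [lia|].
  destruct (Nat.eq_dec k n) as [->|Hkn]; [apply Rmax_r|].
  eapply Rle_trans; [apply IH; lia | apply Rmax_l].
Qed.

Lemma max_upto_attained n f : (0 < n)%nat -> exists k, (k < n)%nat /\ max_upto n f = f k.
Proof.
  induction n as [|n IH]; simpl; intros Hn; [lia|].
  unfold Rmax. destruct Rle_dec; [exists n; split; auto|].
  destruct n as [|n]; [exists O; simpl; split; auto|].
  destruct IH as [k [Hk E]]; [lia|]. exists k. split; [lia | exact E].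
Qed.

(** * Limits at infinity *)

Lemma lim_ext f g l : (forall t, 0 <= t -> f t = g t) -> lim_infty f l -> lim_infty g l.
Proof.
  intros E Hf eps Heps. destruct (Hf eps Heps) as [T HT].
  exists (Rmax T 0). intros t Ht. pose proof (Rmax_l T 0). pose proof (Rmax_r T 0).
  rewrite <- E by lra. apply HT. lra.
Qed.

Lemma lim_const c : lim_infty (fun _ => c) c.
Proof. intros eps Heps. exists 0. intros. rewrite Rminus_diag, Rabs_R0. exact Heps. Qed.

Lemma lim_plus_scal f g a b k :
  lim_infty f a -> lim_infty g b -> lim_infty (fun t => f t + k * g t) (a + k * b).
Proof.
  intros Hf Hg eps Heps.
  assert (Hk : 0 <= Rabs k) by apply Rabs_pos.
  set (e := eps / 2 / (1 + Rabs k)).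
  assert (He : 0 < e) by (apply Rdiv_lt_0_compat; lra).
  assert (Ee : e * (1 + Rabs k) = eps / 2) by (unfold e; field; lra).
  destruct (Hf e He) as [T1 H1]. destruct (Hg e He) as [T2 H2].
  exists (Rmax T1 T2). intros t Ht.
  specialize (H1 t ltac:(pose proof (Rmax_l T1 T2); lra)).
  specialize (H2 t ltac:(pose proof (Rmax_r T1 T2); lra)).
  replace (f t + k * g t - (a + k * b)) with ((f t - a) + k * (g t - b)) by ring.
  eapply Rle_lt_trans; [apply Rabs_triang|]. rewrite Rabs_mult.
  assert (Rabs k * Rabs (g t - b) <= Rabs k * e) by (apply Rmult_le_compat_l; lra).
  nra.
Qed.

Lemma lim_sum n (F : nat -> R -> R) (L : nat -> R) :
  (forall k, (k < n)%nat -> lim_infty (F k) (L k)) ->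
  lim_infty (fun t => sumN n (fun k => F k t)) (sumN n L).
Proof.
  induction n as [|n IH]; intros H; simpl; [apply lim_const|].
  replace (sumN n L + L n) with (sumN n L + 1 * L n) by ring.
  eapply lim_ext; [| apply lim_plus_scal; [apply IH; intros; apply H; lia | apply (H n); lia]].
  intros; simpl; ring.
Qed.

Lemma lim_le f l C : (forall t, 0 <= t -> f t <= C) -> lim_infty f l -> l <= C.
Proof.
  intros H Hf. destruct (Rle_dec l C) as [|Hlt]; [assumption|]. exfalso.
  destruct (Hf (l - C) ltac:(lra)) as [T HT].
  specialize (HT (Rmax T 0) (Rmax_l T 0)). specialize (H (Rmax T 0) (Rmax_r T 0)).
  unfold Rabs in HT; destruct Rcase_abs; lra.
Qed.

Lemma lim_ge f l C : (forall t, 0 <= t -> C <= f t) -> lim_infty f l -> C <= l.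
Proof.
  intros H Hf. destruct (Rle_dec C l) as [|Hlt]; [assumption|]. exfalso.
  destruct (Hf (C - l) ltac:(lra)) as [T HT].
  specialize (HT (Rmax T 0) (Rmax_l T 0)). specialize (H (Rmax T 0) (Rmax_r T 0)).
  unfold Rabs in HT; destruct Rcase_abs; lra.
Qed.

Lemma lim_nonincreasing (f : R -> R) lb :
  (forall t u, 0 <= t -> t <= u -> f u <= f t) -> (forall t, 0 <= t -> lb <= f t) ->
  { l | lim_infty f l /\ forall t, 0 <= t -> l <= f t }.
Proof.
  intros Hm Hb. set (E := fun v => exists t, 0 <= t /\ v = - f t).
  assert (HE : bound E).
  { exists (- lb). intros v [t [Ht ->]]. specialize (Hb t Ht). lra. }
  destruct (completeness E HE (ex_intro _ (- f 0) (ex_intro _ 0 (conj (Rle_refl 0) eq_refl))))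
    as [m [Hub Hlub]].
  exists (- m). split.
  - intros eps Heps.
    destruct (classic (exists t, 0 <= t /\ m - eps < - f t)) as [[t0 [Ht0 Hlt]] | Hno].
    + exists t0. intros t Ht. assert (- f t <= m) by (apply Hub; exists t; split; [lra | auto]).
      pose proof (Hm t0 t Ht0 Ht). unfold Rabs; destruct Rcase_abs; lra.
    + exfalso. assert (m <= m - eps); [|lra]. apply Hlub. intros v [t [Ht ->]].
      destruct (Rle_dec (- f t) (m - eps)) as [|Hgt]; [assumption|].
      exfalso. apply Hno. exists t. split; [assumption | lra].
  - intros t Ht. assert (- f t <= m) by (apply Hub; exists t; split; auto). lra.
Qed.

Lemma lim_sat_abs_le s f c : 0 <= s -> lim_infty (fun t => sat s (f t)) c -> Rabs c <= s.
Proof.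
  intros Hs Hlim. apply Rabs_le. split.
  - apply (lim_ge _ _ _ (fun t _ => proj1 (sat_bounds s (f t) Hs)) Hlim).
  - apply (lim_le _ _ _ (fun t _ => proj2 (sat_bounds s (f t) Hs)) Hlim).
Qed.

Lemma lim_of_lim_sat s f c : lim_infty (fun t => sat s (f t)) c -> Rabs c < s -> lim_infty f c.
Proof.
  intros Hlim Hc eps Heps. pose proof (Rabs_pos c).
  destruct (Hlim (Rmin eps (s - Rabs c)) ltac:(apply Rmin_glb_lt; lra)) as [T HT].
  exists T. intros t Ht. specialize (HT t Ht).
  pose proof (Rmin_l eps (s - Rabs c)). pose proof (Rmin_r eps (s - Rabs c)).
  pose proof (Rabs_triang_inv (sat s (f t)) c).
  rewrite <- (sat_fixed s (f t)); lra.
Qed.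

Lemma exists_pos_nat_gt r : exists n, (0 < n)%nat /\ r < INR n.
Proof.
  destruct (INR_unbounded r) as [n Hn]. exists (S n). split; [lia|].
  rewrite S_INR. lra.
Qed.

Lemma le_0_of_le_div_INR a b : (forall n, (0 < n)%nat -> a <= b / INR n) -> a <= 0.
Proof.
  intros H. destruct (Rle_dec a 0) as [|Ha]; [assumption|]. exfalso.
  destruct (exists_pos_nat_gt (b / a)) as [n [Hn Hbn]].
  assert (HnR : 0 < INR n) by (apply lt_0_INR; exact Hn).
  specialize (H n Hn).
  assert (a * INR n <= b).
  { replace b with (b / INR n * INR n) by (field; lra). apply Rmult_le_compat_r; lra. }
  assert (b < INR n * a).
  { replace b with (b / a * a) by (field; lra). apply Rmult_lt_compat_r; lra. }
  lra.
Qed.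

Lemma grid_induction (P : R -> Prop) t h n :
  P t -> (forall k, (k < n)%nat -> P (t + INR k * h) -> P (t + INR (S k) * h)) ->
  P (t + INR n * h).
Proof.
  intros P0 Hstep. induction n as [|n IH].
  - simpl. replace (t + 0 * h) with t by ring. exact P0.
  - apply Hstep; [lia|]. apply IH. intros k Hk HP. apply Hstep; [lia | exact HP].
Qed.

(* Summing the increments over a grid of mesh [h] gives [Phi u - Phi t <= K (u - t) h]. *)
Lemma nonincreasing_of_quadratic_increments (Phi : R -> R) K t u :
  (forall a b, t <= a <= b -> Phi b - Phi a <= K * ((b - a) * (b - a))) ->
  t <= u -> Phi u <= Phi t.
Proof.
  intros Hinc Htu.
  enough (Phi u - Phi t <= 0) by lra.
  apply (le_0_of_le_div_INR _ (K * ((u - t) * (u - t)))). intros n Hn.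
  assert (HnR : 0 < INR n) by (apply lt_0_INR; exact Hn).
  set (h := (u - t) / INR n).
  assert (Hh : 0 <= h) by (apply Rmult_le_pos; [lra | apply Rlt_le, Rinv_0_lt_compat; lra]).
  assert (Hu : u = t + INR n * h) by (unfold h; field; lra).
  assert (Hgrid : t <= t + INR n * h /\ Phi (t + INR n * h) - Phi t <= K * h * (t + INR n * h - t)).
  { apply (grid_induction (fun v => t <= v /\ Phi v - Phi t <= K * h * (v - t))).
    - split; [lra | rewrite !Rminus_diag; lra].
    - intros k _ [Hv Hphi]. rewrite S_INR.
      pose proof (Hinc (t + INR k * h) (t + (INR k + 1) * h) ltac:(nra)) as Hstep.
      split; nra. }
  rewrite <- Hu in Hgrid. destruct Hgrid as [_ Hgrid].
  replace (K * ((u - t) * (u - t)) / INR n) with (K * h * (u - t)) by (unfold h; field; lra).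
  exact Hgrid.
Qed.

Lemma same_side c rho u v :
  rho <= Rabs (u - c) -> rho <= Rabs (v - c) -> Rabs (u - v) < 2 * rho -> (c < u <-> c < v).
Proof. unfold Rabs; repeat destruct Rcase_abs; intros; split; intros; lra. Qed.

(* Steps of length [h] with [B h < 2 rho] cannot jump across the band [c +- rho]. *)
Lemma lipschitz_keeps_side (f : R -> R) B T0 c rho : 0 < rho ->
  (forall u v, T0 <= v <= u -> Rabs (f u - f v) <= B * (u - v)) ->
  (forall t, T0 <= t -> rho <= Rabs (f t - c)) ->
  forall t, T0 <= t -> (c < f t <-> c < f T0).
Proof.
  intros Hrho Hlip Hfar t Ht.
  assert (HB : 0 <= B * (t - T0)).
  { pose proof (Hlip t T0 ltac:(lra)). pose proof (Rabs_pos (f t - f T0)). lra. }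
  destruct (exists_pos_nat_gt (B * (t - T0) / (2 * rho))) as [n [Hn Hlarge]].
  assert (HnR : 0 < INR n) by (apply lt_0_INR; exact Hn).
  set (h := (t - T0) / INR n).
  assert (Hh : 0 <= h) by (apply Rmult_le_pos; [lra | apply Rlt_le, Rinv_0_lt_compat; lra]).
  assert (Hsmall : B * h < 2 * rho).
  { replace (B * h) with (B * (t - T0) / INR n) by (unfold h; field; lra).
    apply (Rmult_lt_compat_r (2 * rho)) in Hlarge; [|lra].
    unfold Rdiv in Hlarge. rewrite Rmult_assoc, Rinv_l in Hlarge by lra.
    apply (Rmult_lt_reg_r (INR n)); [exact HnR|].
    unfold Rdiv. rewrite Rmult_assoc, Rinv_l by lra. lra. }
  assert (Ht' : t = T0 + INR n * h) by (unfold h; field; lra).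
  enough (T0 <= T0 + INR n * h /\ (c < f (T0 + INR n * h) <-> c < f T0)) as [_ Hside]
    by (rewrite Ht'; exact Hside).
  apply (grid_induction (fun v => T0 <= v /\ (c < f v <-> c < f T0))); [split; [lra | tauto]|].
  intros k _ [Hv Hside]. rewrite S_INR.
  assert (Hk : 0 <= INR k) by apply pos_INR.
  split; [nra|]. rewrite <- Hside. apply same_side with rho; [apply Hfar; nra | apply Hfar; lra|].
  eapply Rle_lt_trans; [apply Hlip; nra|]. lra.
Qed.

Lemma avoid_point a b p : a < b -> exists a' b', (a <= a' /\ a' < b' /\ b' <= b) /\ ~ (a' <= p <= b').
Proof.
  intros Hab. destruct (Rle_dec p ((a + b) / 2)).
  - exists ((3 * a + 5 * b) / 8), b. split; [repeat split; lra | lra].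
  - exists a, ((a + b) / 2). split; [repeat split; lra | lra].
Qed.

Lemma avoid_points (p : nat -> R) n a b : a < b ->
  exists a' b', (a <= a' /\ a' < b' /\ b' <= b) /\
    forall k, (k < n)%nat -> ~ (a' <= p k <= b') /\ ~ (a' <= - p k <= b').
Proof.
  intros Hab. induction n as [|n IH].
  - exists a, b. split; [repeat split; lra | intros; lia].
  - destruct IH as [a1 [b1 [H1 H2]]].
    destruct (avoid_point a1 b1 (p n) ltac:(lra)) as [a2 [b2 [H3 H4]]].
    destruct (avoid_point a2 b2 (- p n) ltac:(lra)) as [a3 [b3 [H5 H6]]].
    exists a3, b3. split; [repeat split; lra|]. intros k Hk.
    destruct (Nat.eq_dec k n) as [->|Hkn]; [split; lra|].
    destruct (H2 k ltac:(lia)). split; lra.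
Qed.

Lemma RiemannInt_le_const f a b C (pr : Riemann_integrable f a b) : a <= b ->
  (forall t, a < t < b -> f t <= C) -> RiemannInt pr <= C * (b - a).
Proof.
  intros Hab H. rewrite <- (RiemannInt_P15 (RiemannInt_P14 a b C)).
  apply RiemannInt_P19; assumption.
Qed.

Lemma integral_infinite_tail f amax T0 : (forall t, 0 <= t -> 0 <= f t <= amax) ->
  integral_infinite f -> 0 <= T0 ->
  forall M, exists T1 (pr : Riemann_integrable f T0 T1), T0 <= T1 /\ M < RiemannInt pr.
Proof.
  intros Hf Hinf HT0 M.
  assert (Hamax : 0 <= amax) by (pose proof (Hf 0 (Rle_refl 0)); lra).
  destruct (Hinf (Rabs M + amax * T0)) as [T1 [HT1 [pr Hpr]]].
  assert (Hle : forall T (pr' : Riemann_integrable f 0 T), 0 <= T -> RiemannInt pr' <= amax * T).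
  { intros T pr' HT. replace (amax * T) with (amax * (T - 0)) by ring.
    apply RiemannInt_le_const; [exact HT|]. intros t Ht. apply Hf. lra. }
  assert (HT01 : T0 <= T1).
  { destruct (Rle_dec T0 T1) as [|Hlt]; [assumption|].
    pose proof (Hle T1 pr HT1). pose proof (Rabs_pos M). nra. }
  set (pra := RiemannInt_P22 pr (conj HT0 HT01)).
  set (prb := RiemannInt_P23 pr (conj HT0 HT01)).
  exists T1, prb. split; [exact HT01|].
  pose proof (RiemannInt_P25 pra prb pr HT0 HT01). pose proof (Hle T0 pra HT0).
  pose proof (Rle_abs M). lra.
Qed.

Lemma connected_by_crossing (E : nat -> nat -> Prop) (P : nat -> Prop) a b :
  connected_by E a b -> P a -> ~ P b -> exists u v, E u v /\ P u /\ ~ P v.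
Proof.
  induction 1 as [|u v w Huv Hvw IH]; intros Pa Pb; [tauto|].
  destruct (classic (P v)); [apply IH; assumption | exists u, v; auto].
Qed.

(** * Level potentials *)

Definition above (c y : R) : R := if Rlt_dec c y then 1 else 0.

Lemma above_gap c u1 u2 v1 v2 e : Rabs (v1 - u1) <= e -> Rabs (v2 - u2) <= e ->
  - (2 * e) <= (above c u1 - above c u2) * (v1 - v2).
Proof.
  unfold above; intros H1 H2. apply Rabs_le_inv in H1. apply Rabs_le_inv in H2.
  repeat destruct Rlt_dec; lra.
Qed.

(* The antiderivative in [x] of [above c (sat s x)]. *)
Definition potential (s c x : R) : R :=
  if Rlt_dec c (- s) then x else if Rlt_dec c s then Rmax (x - c) 0 else 0.

Lemma potential_subgradient s c xa xb : 0 < s ->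
  potential s c xb - potential s c xa <= above c (sat s xb) * (xb - xa).
Proof.
  intros Hs. unfold potential, above, Rmax.
  sat_cases s xb (Rlt_le _ _ Hs); repeat destruct Rlt_dec; repeat destruct Rle_dec; lra.
Qed.

Lemma potential_nonneg s c x : - s <= c -> 0 <= potential s c x.
Proof. intros. unfold potential, Rmax. repeat destruct Rlt_dec; repeat destruct Rle_dec; lra. Qed.

Lemma potential_at_zero s x : 0 < s -> potential s 0 x = Rmax x 0.
Proof. intros. unfold potential. repeat destruct Rlt_dec; try lra. f_equal. ring. Qed.

Lemma potential_zero s c x : 0 < s -> sat s x <= c -> potential s c x = 0.
Proof.
  intros Hs. unfold potential, Rmax.
  sat_cases s x (Rlt_le _ _ Hs); repeat destruct Rlt_dec; repeat destruct Rle_dec; lra.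
Qed.

Lemma sat_le_of_potential_nonpos s c x : 0 < s -> - s <= c -> potential s c x <= 0 -> sat s x <= c.
Proof.
  intros Hs Hc. unfold potential, Rmax.
  sat_cases s x (Rlt_le _ _ Hs); repeat destruct Rlt_dec; repeat destruct Rle_dec; lra.
Qed.

Lemma potential_abs_le s c x : Rabs (potential s c x) <= Rabs x + Rabs c.
Proof.
  unfold potential, Rmax, Rabs.
  repeat destruct Rlt_dec; repeat destruct Rle_dec; repeat destruct Rcase_abs; lra.
Qed.

Definition tent (d c y : R) : R := Rmax 0 (d - Rabs (y - c)).

Lemma tent_nonneg d c y : 0 <= tent d c y.
Proof. apply Rmax_l. Qed.

(* On a [c]-interval avoiding [+- s], [potential s c x] is either [Rmax (x - c) 0] or
   independent of [c]. *)
Lemma potential_second_difference s a b c d x : 0 < s -> 0 < d -> a <= c - d -> c + d <= b ->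
  ~ (a <= s <= b) -> ~ (a <= - s <= b) ->
  potential s (c - d) x - 2 * potential s c x + potential s (c + d) x = tent d c (sat s x).
Proof.
  intros Hs Hd H1 H2 H3 H4.
  assert (Hpos : c + d < - s \/ (- s < c - d /\ c + d < s) \/ s < c - d) by lra.
  unfold potential, tent, Rmax.
  sat_cases s x (Rlt_le _ _ Hs); destruct Hpos as [Hpos | [Hpos | Hpos]];
    repeat destruct Rlt_dec; repeat destruct Rle_dec; unfold Rabs in *;
    repeat destruct Rcase_abs; lra.
Qed.

Lemma sum_tents_zero_above a d y K : 0 < d -> a + 2 * INR K * d <= y ->
  sumN K (fun k => tent d (a + (2 * INR k + 1) * d) y) = 0.
Proof.
  intros Hd. induction K as [|K IH]; intros Hy; simpl; [reflexivity|].
  rewrite S_INR in Hy. rewrite IH by (pose proof (pos_INR K); nra).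
  unfold tent, Rmax, Rabs. destruct Rcase_abs; destruct Rle_dec; lra.
Qed.

(* The tents of half-width [d] centred on [a + d, a + 3d, ...] have disjoint supports. *)
Lemma sum_tents_le a d y K : 0 < d -> sumN K (fun k => tent d (a + (2 * INR k + 1) * d) y) <= d.
Proof.
  intros Hd. induction K as [|K IH]; simpl; [lra|].
  set (c := a + (2 * INR K + 1) * d).
  destruct (Rlt_dec 0 (tent d c y)) as [Hp|Hp].
  - assert (Hnear : Rabs (y - c) < d) by (unfold tent, Rmax in Hp; destruct Rle_dec; lra).
    assert (tent d c y <= d)
      by (unfold tent, Rmax; pose proof (Rabs_pos (y - c)); destruct Rle_dec; lra).
    rewrite sum_tents_zero_above; [lra | exact Hd |].
    apply Rabs_def2 in Hnear. unfold c in Hnear. lra.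
  - pose proof (tent_nonneg d c y). lra.
Qed.

(** * The saturated consensus flow *)

Definition sat_state (s : nat -> R) (x : nat -> R -> R) (i : nat) (t : R) : R :=
  sat (s i) (x i t).

Record system (N : nat) (s : nat -> R) (alpha : nat -> nat -> R -> R) (amax : R)
    (x : nat -> R -> R) : Prop := {
  system_s_pos : forall i, (i < N)%nat -> 0 < s i;
  system_s_le : forall i, (i < N)%nat -> s i <= s 0%nat;
  system_alpha_sym : forall i j t, 0 <= t -> alpha i j t = alpha j i t;
  system_alpha_bounds : forall i j t, 0 <= t -> 0 <= alpha i j t <= amax;
  system_increment : forall i, (i < N)%nat -> forall a b, 0 <= a <= b ->
    exists pr : Riemann_integrable (rhs N alpha s x i) a b, RiemannInt pr = x i b - x i a }.

Arguments system_s_pos {N s alpha amax x}.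
Arguments system_s_le {N s alpha amax x}.
Arguments system_alpha_sym {N s alpha amax x}.
Arguments system_alpha_bounds {N s alpha amax x}.
Arguments system_increment {N s alpha amax x}.

Lemma caratheodory_increment N alpha s x : caratheodory_solution N alpha s x ->
  forall i, (i < N)%nat -> forall a b, 0 <= a <= b ->
    exists pr : Riemann_integrable (rhs N alpha s x i) a b, RiemannInt pr = x i b - x i a.
Proof.
  intros Hsol i Hi a b [Ha Hab].
  destruct (Hsol i Hi b ltac:(lra)) as [prb Eb]. destruct (Hsol i Hi a Ha) as [pra Ea].
  set (pab := RiemannInt_P23 prb (conj Ha Hab)).
  exists pab. pose proof (RiemannInt_P25 pra pab prb Ha Hab). lra.
Qed.

Definition speed (N : nat) (s : nat -> R) (amax : R) : R := INR N * (2 * amax * s 0%nat).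

Definition level_potential (N : nat) (s : nat -> R) (x : nat -> R -> R) (c t : R) : R :=
  sumN N (fun i => potential (s i) c (x i t)).

Lemma level_potential_nonneg N s x c t :
  (forall k, (k < N)%nat -> - s k <= c) -> 0 <= level_potential N s x c t.
Proof. intros Hc. apply sumN_nonneg. intros k Hk. apply potential_nonneg, Hc, Hk. Qed.

Section Flow.

Context {N : nat} {s : nat -> R} {alpha : nat -> nat -> R -> R} {amax : R} {x : nat -> R -> R}.
Hypothesis Hx : system N s alpha amax x.

Lemma amax_nonneg : 0 <= amax.
Proof. pose proof (system_alpha_bounds Hx 0%nat 0%nat 0 (Rle_refl 0)). lra. Qed.

Lemma speed_nonneg : 0 <= speed N s amax.
Proof.
  unfold speed. destruct (Nat.eq_dec N 0) as [->|HN]; [simpl; lra|].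
  pose proof (system_s_pos Hx 0%nat ltac:(lia)). pose proof amax_nonneg.
  apply Rmult_le_pos; [apply pos_INR | nra].
Qed.

Lemma rhs_abs_le i t : (i < N)%nat -> 0 <= t -> Rabs (rhs N alpha s x i t) <= speed N s amax.
Proof.
  intros Hi Ht. unfold rhs, speed. apply sumN_abs_le. intros j Hj.
  destruct (system_alpha_bounds Hx i j t Ht).
  pose proof (sat_bounds (s j) (x j t) (Rlt_le _ _ (system_s_pos Hx j Hj))).
  pose proof (sat_bounds (s i) (x i t) (Rlt_le _ _ (system_s_pos Hx i Hi))).
  pose proof (system_s_le Hx i Hi). pose proof (system_s_le Hx j Hj).
  rewrite Rabs_mult, (Rabs_right (alpha i j t)) by lra.
  replace (2 * amax * s 0%nat) with (amax * (2 * s 0%nat)) by ring.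
  apply Rmult_le_compat; [lra | apply Rabs_pos | lra |].
  apply Rabs_le. lra.
Qed.

Lemma state_lipschitz i a b : (i < N)%nat -> 0 <= a <= b ->
  Rabs (x i b - x i a) <= speed N s amax * (b - a).
Proof.
  intros Hi Hab. destruct (system_increment Hx i Hi a b Hab) as [pr E]. rewrite <- E.
  assert (Hbound : forall t, a < t < b ->
    - speed N s amax <= rhs N alpha s x i t <= speed N s amax).
  { intros t Ht. apply Rabs_le_inv, rhs_abs_le; [exact Hi | lra]. }
  pose proof (RiemannInt_const_bound pr (proj2 Hab) Hbound).
  apply Rabs_le. lra.
Qed.

Lemma sat_state_lipschitz i a b : (i < N)%nat -> 0 <= a <= b ->
  Rabs (sat_state s x i b - sat_state s x i a) <= speed N s amax * (b - a).
Proof.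
  intros Hi Hab. eapply Rle_trans; [apply sat_lipschitz, Rlt_le, (system_s_pos Hx i Hi)|].
  apply state_lipschitz; assumption.
Qed.

Lemma weighted_increment (d : nat -> R) a b n : 0 <= a <= b -> (n <= N)%nat ->
  exists pr : Riemann_integrable (fun t => sumN n (fun i => d i * rhs N alpha s x i t)) a b,
    RiemannInt pr = sumN n (fun i => d i * (x i b - x i a)).
Proof.
  intros Hab. induction n as [|n IH]; intros Hn; simpl.
  - exists (RiemannInt_P14 a b 0). transitivity (0 * (b - a)); [apply RiemannInt_P15 | ring].
  - destruct IH as [pr1 E1]; [lia|].
    destruct (system_increment Hx n ltac:(lia) a b Hab) as [pr2 E2].
    exists (RiemannInt_P10 (d n) pr1 pr2).
    rewrite (RiemannInt_P13 pr1 pr2 (RiemannInt_P10 (d n) pr1 pr2)), E1, E2. reflexivity.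
Qed.

Lemma flux_identity (d : nat -> R) t : 0 <= t ->
  sumN N (fun i => d i * rhs N alpha s x i t) =
  - / 2 * sumN N (fun i => sumN N (fun j =>
      alpha i j t * ((d i - d j) * (sat_state s x i t - sat_state s x j t)))).
Proof.
  intros Ht. apply (symmetric_sum_identity N (fun i j => alpha i j t) d (fun i => sat_state s x i t)).
  intros i j _ _. apply (system_alpha_sym Hx). exact Ht.
Qed.

(* Freezing the weights [above c] at time [b], each pair contributes a flux of the right sign
   up to the drift of the saturated states over [t, b]. *)
Lemma frozen_flux_le c a b t : 0 <= a -> a <= t <= b ->
  sumN N (fun i => above c (sat_state s x i b) * rhs N alpha s x i t)
  <= INR N * INR N * amax * speed N s amax * (b - a).
Proof.
  intros Ha Ht. rewrite flux_identity by lra.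
  set (B := speed N s amax).
  assert (Hgap : forall i j, (i < N)%nat -> (j < N)%nat ->
    - (amax * (2 * (B * (b - a)))) <= alpha i j t *
      ((above c (sat_state s x i b) - above c (sat_state s x j b)) *
       (sat_state s x i t - sat_state s x j t))).
  { intros i j Hi Hj. destruct (system_alpha_bounds Hx i j t ltac:(lra)).
    assert (Hdrift : forall k, (k < N)%nat ->
      Rabs (sat_state s x k t - sat_state s x k b) <= B * (b - a)).
    { intros k Hk. rewrite Rabs_minus_sym. eapply Rle_trans.
      - apply sat_state_lipschitz; [exact Hk | lra].
      - apply Rmult_le_compat_l; [apply speed_nonneg | lra]. }
    pose proof (above_gap c _ _ _ _ _ (Hdrift i Hi) (Hdrift j Hj)).
    assert (0 <= B * (b - a)) by (apply Rmult_le_pos; [apply speed_nonneg | lra]).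
    destruct (Rle_dec 0 ((above c (sat_state s x i b) - above c (sat_state s x j b)) *
       (sat_state s x i t - sat_state s x j t))); nra. }
  pose proof (sumN_lower N _ _ (fun i Hi => sumN_lower N _ _ (fun j Hj => Hgap i j Hi Hj))).
  nra.
Qed.

Lemma level_potential_increment_le c a b : 0 <= a <= b ->
  level_potential N s x c b - level_potential N s x c a
  <= INR N * INR N * amax * speed N s amax * ((b - a) * (b - a)).
Proof.
  intros Hab. set (d := fun i => above c (sat_state s x i b)).
  assert (Hsub : level_potential N s x c b - level_potential N s x c a
                 <= sumN N (fun i => d i * (x i b - x i a))).
  { unfold level_potential. rewrite <- sumN_minus. apply sumN_le. intros i Hi.
    apply potential_subgradient, (system_s_pos Hx i Hi). }
  destruct (weighted_increment d a b N Hab (le_n N)) as [pr E]. rewrite <- E in Hsub.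
  eapply Rle_trans; [exact Hsub|].
  replace (INR N * INR N * amax * speed N s amax * ((b - a) * (b - a)))
    with (INR N * INR N * amax * speed N s amax * (b - a) * (b - a)) by ring.
  apply RiemannInt_le_const; [lra|]. intros t Ht. apply frozen_flux_le; lra.
Qed.

Lemma level_potential_nonincreasing c t u : 0 <= t -> t <= u ->
  level_potential N s x c u <= level_potential N s x c t.
Proof.
  intros Ht Htu.
  apply (nonincreasing_of_quadratic_increments _ (INR N * INR N * amax * speed N s amax));
    [|exact Htu].
  intros a b Hab. apply level_potential_increment_le. lra.
Qed.

Lemma state_le_level_potential0 i t : (i < N)%nat -> 0 <= t -> x i t <= level_potential N s x 0 0.
Proof.
  intros Hi Ht.
  assert (Hnn : forall k, (k < N)%nat -> 0 <= potential (s k) 0 (x k t)).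
  { intros k Hk. apply potential_nonneg. pose proof (system_s_pos Hx k Hk). lra. }
  pose proof (sumN_ge_term N _ i Hnn Hi) as Hterm. cbv beta in Hterm.
  rewrite potential_at_zero in Hterm by exact (system_s_pos Hx i Hi).
  pose proof (level_potential_nonincreasing 0 0 t (Rle_refl 0) Ht).
  pose proof (Rmax_l (x i t) 0). unfold level_potential in *. lra.
Qed.

(* The flux identity with all weights equal to 1 vanishes. *)
Lemma sum_states_constant t : 0 <= t -> sumN N (fun i => x i t) = sumN N (fun i => x i 0).
Proof.
  intros Ht. destruct (weighted_increment (fun _ => 1) 0 t N ltac:(lra) (le_n N)) as [pr E].
  assert (Hzero : RiemannInt pr = 0).
  { rewrite (RiemannInt_P18 pr (RiemannInt_P14 0 t 0)); [| exact Ht |].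
    - rewrite RiemannInt_P15. ring.
    - intros u Hu. rewrite flux_identity by lra. unfold fct_cte.
      rewrite (sumN_ext _ _ (fun _ => 0)); [rewrite sumN_const; ring|].
      intros i Hi. rewrite (sumN_ext _ _ (fun _ => 0)); [rewrite sumN_const; ring|].
      intros j Hj. ring. }
  rewrite Hzero in E. rewrite (sumN_ext _ _ (fun i => x i t - x i 0)), sumN_minus in E
    by (intros; ring).
  lra.
Qed.

Lemma last_state_converges n (L : nat -> R) : S n = N ->
  (forall j, (j < n)%nat -> lim_infty (x j) (L j)) ->
  lim_infty (x n) (sumN N (fun j => x j 0) - sumN n L).
Proof.
  intros HSn HL.
  apply (lim_ext (fun t => sumN N (fun j => x j 0) + -1 * sumN n (fun j => x j t))).
  - intros t Ht. rewrite <- (sum_states_constant t Ht), <- HSn. simpl. ring.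
  - replace (sumN N (fun j => x j 0) - sumN n L)
      with (sumN N (fun j => x j 0) + -1 * sumN n L) by ring.
    apply lim_plus_scal; [apply lim_const | apply lim_sum, HL].
Qed.

End Flow.

Definition oppx (x : nat -> R -> R) : nat -> R -> R := fun i t => - x i t.

Lemma rhs_oppx N alpha s x i t : (forall j, (j < N)%nat -> 0 <= s j) -> (i < N)%nat ->
  rhs N alpha s (oppx x) i t = - rhs N alpha s x i t.
Proof.
  intros Hs Hi. unfold rhs, oppx.
  replace (- sumN N _) with (-1 * sumN N (fun j => alpha i j t * (sat (s j) (x j t) - sat (s i) (x i t))))
    by ring.
  rewrite <- sumN_scal.
  apply sumN_ext. intros j Hj. rewrite !sat_opp by auto. ring.
Qed.

Lemma system_oppx {N s alpha amax x} :
  system N s alpha amax x -> system N s alpha amax (oppx x).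
Proof.
  intros Hx. split; try apply Hx.
  intros i Hi a b Hab. destruct (system_increment Hx i Hi a b Hab) as [pr E].
  assert (Hs : forall j, (j < N)%nat -> 0 <= s j) by (intros; apply Rlt_le, (system_s_pos Hx); auto).
  set (pr0 := RiemannInt_P10 (-1) (RiemannInt_P14 a b 0) pr).
  assert (Hext : forall t, Rmin a b <= t <= Rmax a b ->
    fct_cte 0 t + -1 * rhs N alpha s x i t = rhs N alpha s (oppx x) i t).
  { intros t _. rewrite rhs_oppx by assumption. unfold fct_cte. ring. }
  exists (@Riemann_integrable_ext _ _ a b Hext pr0).
  rewrite (RiemannInt_P18 _ pr0 (proj2 Hab)) by (intros t Ht; symmetry; apply Hext; rewrite Rmin_left, Rmax_right by lra; lra).
  unfold pr0. rewrite (RiemannInt_P13 (RiemannInt_P14 a b 0) pr), RiemannInt_P15, E.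
  unfold oppx. ring.
Qed.

Lemma sat_state_oppx s x i t : 0 <= s i -> sat_state s (oppx x) i t = - sat_state s x i t.
Proof. intros Hs. apply sat_opp, Hs. Qed.

Definition state_bound N s x : R := level_potential N s x 0 0 + level_potential N s (oppx x) 0 0.

Definition max_state N s x t : R := max_upto N (fun i => sat_state s x i t).

Lemma max_state_ge N s x i t : (i < N)%nat -> sat_state s x i t <= max_state N s x t.
Proof. intros Hi. apply (max_upto_ge N (fun i => sat_state s x i t)), Hi. Qed.

Section Extremes.

Context {N : nat} {s : nat -> R} {alpha : nat -> nat -> R -> R} {amax : R} {x : nat -> R -> R}.
Hypothesis Hx : system N s alpha amax x.

Lemma state_abs_le i t : (i < N)%nat -> 0 <= t -> Rabs (x i t) <= state_bound N s x.
Proof.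
  intros Hi Ht. unfold state_bound.
  assert (Hs0 : forall k, (k < N)%nat -> - s k <= 0)
    by (intros k Hk; pose proof (system_s_pos Hx k Hk); lra).
  pose proof (state_le_level_potential0 Hx i t Hi Ht).
  pose proof (state_le_level_potential0 (system_oppx Hx) i t Hi Ht). unfold oppx at 1 in H0.
  pose proof (level_potential_nonneg N s x 0 0 Hs0).
  pose proof (level_potential_nonneg N s (oppx x) 0 0 Hs0).
  apply Rabs_le. lra.
Qed.

Lemma level_potential_converges c : { l | lim_infty (level_potential N s x c) l }.
Proof.
  destruct (lim_nonincreasing (level_potential N s x c) (- (INR N * (state_bound N s x + Rabs c))))
    as [l [Hl _]].
  - intros t u Ht Htu. apply (level_potential_nonincreasing Hx); assumption.
  - intros t Ht.
    enough (Hb : Rabs (level_potential N s x c t) <= INR N * (state_bound N s x + Rabs c))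
      by (apply Rabs_le_inv in Hb; lra).
    unfold level_potential. apply sumN_abs_le.
    intros k Hk. eapply Rle_trans; [apply potential_abs_le|].
    pose proof (state_abs_le k t Hk Ht). lra.
  - exists l. exact Hl.
Qed.

(* At level [c = max_state t] the potential vanishes at time [t], hence at all later times. *)
Lemma max_state_nonincreasing t u : (0 < N)%nat -> 0 <= t -> t <= u ->
  max_state N s x u <= max_state N s x t.
Proof.
  intros HN Ht Htu. set (c := max_state N s x t).
  assert (Hc : forall i, (i < N)%nat -> - s i <= c).
  { intros i Hi. pose proof (max_state_ge N s x i t Hi).
    pose proof (sat_bounds (s i) (x i t) (Rlt_le _ _ (system_s_pos Hx i Hi))).
    unfold sat_state in *. fold c in H. lra. }
  assert (Hzero : level_potential N s x c t = 0).
  { unfold level_potential. rewrite (sumN_ext _ _ (fun _ => 0)); [rewrite sumN_const; ring|].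
    intros i Hi. apply potential_zero; [apply (system_s_pos Hx i Hi)|].
    apply (max_state_ge N s x i t Hi). }
  pose proof (level_potential_nonincreasing Hx c t u Ht Htu) as Hmono.
  destruct (max_upto_attained N (fun i => sat_state s x i u) HN) as [k [Hk E]].
  unfold max_state. rewrite E.
  apply sat_le_of_potential_nonpos; [apply (system_s_pos Hx k Hk) | apply Hc, Hk |].
  pose proof (sumN_ge_term N (fun i => potential (s i) c (x i u)) k
    (fun i Hi => potential_nonneg _ _ _ (Hc i Hi)) Hk).
  unfold level_potential in *. lra.
Qed.

Lemma max_state_converges : (0 < N)%nat ->
  { L | lim_infty (max_state N s x) L /\ forall t, 0 <= t -> L <= max_state N s x t }.
Proof.
  intros HN. apply (lim_nonincreasing _ (- s 0%nat)).
  - intros t u Ht Htu. apply max_state_nonincreasing; assumption.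
  - intros t Ht. eapply Rle_trans; [|apply (max_state_ge N s x 0 t HN)].
    apply sat_bounds, Rlt_le, (system_s_pos Hx 0%nat HN).
Qed.

End Extremes.

Definition crowd N s x (d c t : R) : R := sumN N (fun i => tent d c (sat_state s x i t)).

Section Consensus.

Context {N : nat} {s : nat -> R} {alpha : nat -> nat -> R -> R} {amax : R} {x : nat -> R -> R}.
Hypothesis Hx : system N s alpha amax x.

Lemma crowd_converges a b c d : 0 < d -> a <= c - d -> c + d <= b ->
  (forall k, (k < N)%nat -> ~ (a <= s k <= b) /\ ~ (a <= - s k <= b)) ->
  exists l, lim_infty (crowd N s x d c) l.
Proof.
  intros Hd Hlo Hhi Hfree.
  destruct (level_potential_converges Hx (c - d)) as [l1 Hl1].
  destruct (level_potential_converges Hx c) as [l2 Hl2].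
  destruct (level_potential_converges Hx (c + d)) as [l3 Hl3].
  exists (l1 + -2 * l2 + 1 * l3).
  eapply lim_ext; [| apply lim_plus_scal; [apply lim_plus_scal|]; eassumption].
  intros t _. unfold crowd, level_potential. rewrite <- !sumN_scal, <- !sumN_plus.
  apply sumN_ext. intros i Hi. destruct (Hfree i Hi). unfold sat_state.
  rewrite <- (potential_second_difference (s i) a b c d (x i t)); try assumption; [ring|].
  apply (system_s_pos Hx i Hi).
Qed.

(* Pigeonhole on [2N + 1] disjoint tents: at most [N] of them can keep a limit crowd [>= d/2]. *)
Lemma eventually_clear_level a b : a < b ->
  (forall k, (k < N)%nat -> ~ (a <= s k <= b) /\ ~ (a <= - s k <= b)) ->
  exists c rho T, a < c < b /\ 0 < rho /\
    forall t, T <= t -> forall i, (i < N)%nat -> rho <= Rabs (sat_state s x i t - c).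
Proof.
  intros Hab Hfree.
  set (K := S (2 * N)).
  assert (HK : INR K = 2 * INR N + 1) by (unfold K; rewrite S_INR, mult_INR; simpl; ring).
  assert (HN : 0 <= INR N) by apply pos_INR.
  set (d := (b - a) / (2 * INR K)).
  assert (Hd : 0 < d) by (unfold d; apply Rdiv_lt_0_compat; lra).
  assert (Hwidth : 2 * INR K * d = b - a) by (unfold d; field; lra).
  set (cen := fun k => a + (2 * INR k + 1) * d).
  assert (Hcen : forall k, (k < K)%nat -> a <= cen k - d /\ cen k + d <= b).
  { intros k Hk. assert (INR k + 1 <= INR K) by (rewrite <- S_INR; apply le_INR; lia).
    pose proof (pos_INR k). unfold cen. split; nra. }
  destruct (finite_choice (fun k l => lim_infty (crowd N s x d (cen k)) l) K) as [L HL].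
  { intros k Hk. destruct (Hcen k Hk). apply (crowd_converges a b); assumption. }
  assert (Hsum : sumN K L <= INR N * d).
  { apply (lim_le (fun t => sumN K (fun k => crowd N s x d (cen k) t))); [|apply lim_sum, HL].
    intros t _. unfold crowd. rewrite sumN_swap, <- sumN_const.
    apply sumN_le. intros i _. apply sum_tents_le, Hd. }
  destruct (sumN_lt_exists K L (d / 2)) as [k [Hk HLk]]; [rewrite HK; nra|].
  destruct (HL k Hk (d / 2 - L k) ltac:(lra)) as [T HT].
  exists (cen k), (d / 2), T. destruct (Hcen k Hk). split; [lra|]. split; [lra|].
  intros t Ht i Hi. specialize (HT t Ht). apply Rabs_def2 in HT.
  pose proof (sumN_ge_term N (fun i => tent d (cen k) (sat_state s x i t)) i
    (fun l _ => tent_nonneg _ _ _) Hi).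
  pose proof (Rmax_r 0 (d - Rabs (sat_state s x i t - cen k))).
  unfold crowd, tent in *. lra.
Qed.

Lemma sides_frozen c rho T0 : 0 <= T0 -> 0 < rho ->
  (forall t, T0 <= t -> forall i, (i < N)%nat -> rho <= Rabs (sat_state s x i t - c)) ->
  forall l t, (l < N)%nat -> T0 <= t ->
    (above c (sat_state s x l T0) = 1 /\ c + rho <= sat_state s x l t) \/
    (above c (sat_state s x l T0) = 0 /\ sat_state s x l t <= c - rho).
Proof.
  intros HT0 Hrho Hfar l t Hl Ht.
  pose proof (lipschitz_keeps_side (sat_state s x l) (speed N s amax) T0 c rho Hrho
    (fun u v Huv => sat_state_lipschitz Hx l v u Hl ltac:(lra))
    (fun t' Ht' => Hfar t' Ht' l Hl) t Ht) as Hside.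
  pose proof (Hfar t Ht l Hl) as Hfar_t. unfold above.
  destruct (Rlt_dec c (sat_state s x l T0)) as [Hup|Hup]; [left | right]; (split; [reflexivity|]).
  - assert (c < sat_state s x l t) by tauto. unfold Rabs in Hfar_t; destruct Rcase_abs; lra.
  - assert (~ c < sat_state s x l t) by tauto. unfold Rabs in Hfar_t; destruct Rcase_abs; lra.
Qed.

Lemma flux_across_cut (d : nat -> R) c rho i j t : 0 <= t -> 0 < rho ->
  (forall l, (l < N)%nat -> (d l = 1 /\ c + rho <= sat_state s x l t) \/
                           (d l = 0 /\ sat_state s x l t <= c - rho)) ->
  (i < N)%nat -> (j < N)%nat -> d i = 1 -> d j = 0 ->
  sumN N (fun l => d l * rhs N alpha s x l t) <= - (2 * rho) * alpha i j t.
Proof.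
  intros Ht Hrho Hside Hi Hj Hdi Hdj. rewrite (flux_identity Hx d t Ht).
  set (e := fun k l => alpha k l t * ((d k - d l) * (sat_state s x k t - sat_state s x l t))).
  assert (He : forall k l, (k < N)%nat -> (l < N)%nat -> 0 <= e k l).
  { intros k l Hk Hl. unfold e. destruct (system_alpha_bounds Hx k l t Ht).
    apply Rmult_le_pos; [lra|].
    destruct (Hside k Hk) as [[-> ?]|[-> ?]]; destruct (Hside l Hl) as [[-> ?]|[-> ?]]; nra. }
  destruct (system_alpha_bounds Hx i j t Ht).
  destruct (Hside i Hi) as [[_ Hyi]|[? _]]; [|lra].
  destruct (Hside j Hj) as [[? _]|[_ Hyj]]; [lra|].
  assert (Eij : 2 * rho * alpha i j t <= e i j) by (unfold e; rewrite Hdi, Hdj; nra).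
  assert (Eji : 2 * rho * alpha i j t <= e j i)
    by (unfold e; rewrite (system_alpha_sym Hx j i t Ht), Hdi, Hdj; nra).
  assert (Hij : i <> j) by (intros ->; lra).
  assert (Rows : forall k, (k < N)%nat -> 0 <= sumN N (fun l => e k l))
    by (intros k Hk; apply sumN_nonneg; intros; apply He; auto).
  pose proof (sumN_ge_two N (fun k => sumN N (fun l => e k l)) i j Rows Hi Hj Hij).
  pose proof (sumN_ge_term N (fun l => e i l) j (fun l Hl => He i l Hi Hl) Hj).
  pose proof (sumN_ge_term N (fun l => e j l) i (fun l Hl => He j l Hj Hl) Hi).
  change (- / 2 * sumN N (fun k => sumN N (fun l => e k l)) <= - (2 * rho) * alpha i j t).
  lra.
Qed.

(* Once no state crosses the level [c], the states above [c] lose mass at rate at least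
   [2 rho alpha_ij]; boundedness of the states caps the integral of [alpha_ij]. *)
Lemma separated_edge_integral_le c rho i j T0 T1 (pr : Riemann_integrable (alpha i j) T0 T1) :
  0 <= T0 -> T0 <= T1 -> 0 < rho ->
  (forall t, T0 <= t -> forall l, (l < N)%nat -> rho <= Rabs (sat_state s x l t - c)) ->
  (i < N)%nat -> (j < N)%nat -> c < sat_state s x i T0 -> sat_state s x j T0 <= c ->
  RiemannInt pr <= INR N * state_bound N s x / rho.
Proof.
  intros HT0 HT01 Hrho Hfar Hi Hj Hci Hcj.
  set (d := fun l => above c (sat_state s x l T0)).
  assert (Hdi : d i = 1) by (unfold d, above; destruct Rlt_dec; [reflexivity | lra]).
  assert (Hdj : d j = 0) by (unfold d, above; destruct Rlt_dec; [lra | reflexivity]).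
  destruct (weighted_increment Hx d T0 T1 N ltac:(lra) (le_n N)) as [prw E].
  set (prs := RiemannInt_P10 (- (2 * rho)) (RiemannInt_P14 T0 T1 0) pr).
  assert (Hflux : RiemannInt prw <= RiemannInt prs).
  { apply RiemannInt_P19; [exact HT01|]. intros t Ht. unfold fct_cte. rewrite Rplus_0_l.
    apply (flux_across_cut d c rho); try assumption; [lra|].
    intros l Hl. apply (sides_frozen c rho T0); auto; lra. }
  unfold prs in Hflux.
  rewrite (RiemannInt_P13 (RiemannInt_P14 T0 T1 0) pr), RiemannInt_P15, E in Hflux.
  assert (Hbound : Rabs (sumN N (fun l => d l * (x l T1 - x l T0)))
                   <= INR N * (2 * state_bound N s x)).
  { apply sumN_abs_le. intros l Hl. rewrite Rabs_mult.
    assert (Rabs (d l) <= 1)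
      by (unfold d, above; destruct Rlt_dec; rewrite ?Rabs_R1, ?Rabs_R0; lra).
    pose proof (state_abs_le Hx l T1 Hl ltac:(lra)). pose proof (state_abs_le Hx l T0 Hl HT0).
    pose proof (Rabs_triang (x l T1) (- x l T0)). rewrite Rabs_Ropp in H2.
    replace (2 * state_bound N s x) with (1 * (2 * state_bound N s x)) by ring.
    apply Rmult_le_compat; [apply Rabs_pos | apply Rabs_pos | assumption | unfold Rminus; lra]. }
  apply Rabs_le_inv in Hbound.
  assert (rho * RiemannInt pr <= INR N * state_bound N s x) by lra.
  replace (RiemannInt pr) with (rho * RiemannInt pr / rho) by (field; lra).
  unfold Rdiv. apply Rmult_le_compat_r; [apply Rlt_le, Rinv_0_lt_compat|]; lra.
Qed.

Lemma max_states_meet L1 L2 : integrally_connected N alpha -> (0 < N)%nat ->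
  (forall t, 0 <= t -> L1 <= max_state N s x t) ->
  (forall t, 0 <= t -> L2 <= max_state N s (oppx x) t) -> L1 + L2 <= 0.
Proof.
  intros Hconn HN HL1 HL2. apply Rnot_lt_le. intros Hgap.
  destruct (avoid_points s N (- L2) L1 ltac:(lra)) as [a [b [[Ha [Hab Hb]] Hfree]]].
  destruct (eventually_clear_level a b Hab Hfree) as [c [rho [T [Hc [Hrho Hfar]]]]].
  set (T0 := Rmax T 0). assert (HT0 : 0 <= T0) by apply Rmax_r.
  assert (HTT0 : T <= T0) by apply Rmax_l.
  assert (Hfar0 : forall t, T0 <= t -> forall l, (l < N)%nat ->
    rho <= Rabs (sat_state s x l t - c)) by (intros; apply Hfar; [lra | auto]).
  destruct (max_upto_attained N (fun l => sat_state s x l T0) HN) as [k [Hk Ek]].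
  destruct (max_upto_attained N (fun l => sat_state s (oppx x) l T0) HN) as [j [Hj Ej]].
  assert (Hup : c < sat_state s x k T0).
  { pose proof (HL1 T0 HT0). unfold max_state in *. rewrite Ek in *. lra. }
  assert (Hdown : ~ c < sat_state s x j T0).
  { pose proof (HL2 T0 HT0). unfold max_state in *. rewrite Ej in *.
    rewrite sat_state_oppx in * by apply Rlt_le, (system_s_pos Hx j Hj). lra. }
  destruct (connected_by_crossing _ (fun l => c < sat_state s x l T0) k j (Hconn k j Hk Hj) Hup Hdown)
    as [u [v [[Hu [Hv Hinf]] [Pu Pv]]]].
  destruct (integral_infinite_tail (alpha u v) amax T0 (system_alpha_bounds Hx u v) Hinf HT0
    (INR N * state_bound N s x / rho)) as [T1 [pr [HT01 Hbig]]].
  pose proof (separated_edge_integral_le c rho u v T0 T1 pr HT0 HT01 Hrho Hfar0 Hu Hv Pu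
    (Rnot_lt_le _ _ Pv)).
  lra.
Qed.

Lemma sat_states_converge : integrally_connected N alpha -> (0 < N)%nat ->
  exists c, forall i, (i < N)%nat -> lim_infty (sat_state s x i) c.
Proof.
  intros Hconn HN.
  destruct (max_state_converges Hx HN) as [L1 [Hlim1 HL1]].
  destruct (max_state_converges (system_oppx Hx) HN) as [L2 [Hlim2 HL2]].
  pose proof (max_states_meet L1 L2 Hconn HN HL1 HL2) as Hmeet.
  exists L1. intros i Hi eps Heps.
  destruct (Hlim1 eps Heps) as [T1 HT1]. destruct (Hlim2 eps Heps) as [T2 HT2].
  exists (Rmax (Rmax T1 T2) 0). intros t Ht.
  pose proof (Rmax_l (Rmax T1 T2) 0). pose proof (Rmax_r (Rmax T1 T2) 0).
  pose proof (Rmax_l T1 T2). pose proof (Rmax_r T1 T2).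
  specialize (HT1 t ltac:(lra)). specialize (HT2 t ltac:(lra)).
  pose proof (max_state_ge N s x i t Hi).
  pose proof (max_state_ge N s (oppx x) i t Hi).
  rewrite sat_state_oppx in * by apply Rlt_le, (system_s_pos Hx i Hi).
  apply Rabs_def2 in HT1. apply Rabs_def2 in HT2. apply Rabs_def1; lra.
Qed.

End Consensus.

Lemma thresholds_decreasing (s : nat -> R) N : (forall i, (S i < N)%nat -> s (S i) < s i) ->
  forall i j, (i < j)%nat -> (j < N)%nat -> s j < s i.
Proof.
  intros Hdec i j Hij. induction Hij as [|j Hij IH]; intros Hj; [apply Hdec, Hj|].
  pose proof (Hdec j Hj). pose proof (IH ltac:(lia)). lra.
Qed.

Theorem lemma8 (N : nat) (s : nat -> R) (alpha : nat -> nat -> R -> R)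
  (amin amax : R) (x : nat -> R -> R)
  (Hs_dec : forall i, (S i < N)%nat -> s (S i) < s i)
  (Hs_pos : 0 < s (pred N))
  (Hsym : forall i j t, 0 <= t -> alpha i j t = alpha j i t)
  (Hamin : 0 < amin) (Hamm : amin <= amax)
  (Hvals : forall i j t, 0 <= t ->
     alpha i j t = 0 \/ (amin <= alpha i j t /\ alpha i j t <= amax))
  (Hcont : forall i j, (i < N)%nat -> (j < N)%nat -> ae_continuous (alpha i j))
  (Hconn : integrally_connected N alpha)
  (Hsol : caratheodory_solution N alpha s x) :
  forall i, (i < N)%nat ->
    exists xstar, lim_infty (x i) xstar /\
      ((S i < N)%nat -> - s (pred N) <= xstar <= s (pred N)).
Proof.
  intros i Hi. pose proof (thresholds_decreasing s N Hs_dec) as Hdec.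
  assert (Hmin : forall j, (j < N)%nat -> s (pred N) <= s j).
  { intros j Hj. destruct (Nat.eq_dec j (pred N)) as [->|Hne]; [lra|].
    apply Rlt_le, Hdec; lia. }
  assert (Hx : system N s alpha amax x).
  { split; [| | exact Hsym | | exact (caratheodory_increment _ _ _ _ Hsol)].
    - intros j Hj. specialize (Hmin j Hj). lra.
    - intros [|j] Hj; [lra | apply Rlt_le, Hdec; lia].
    - intros j k t Ht. destruct (Hvals j k t Ht) as [->|]; lra. }
  destruct (sat_states_converge Hx Hconn ltac:(lia)) as [c Hc].
  assert (Hcs : Rabs c <= s (pred N)) by (apply (lim_sat_abs_le _ (x (pred N))); [lra | apply Hc; lia]).
  assert (Hunsat : forall j, (S j < N)%nat -> lim_infty (x j) c).
  { intros j Hj. apply (lim_of_lim_sat (s j)); [apply Hc; lia|].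
    pose proof (Hdec j (pred N) ltac:(lia) ltac:(lia)). lra. }
  destruct (Nat.eq_dec (S i) N) as [Hlast|Hnot].
  - exists (sumN N (fun j => x j 0) - sumN i (fun _ => c)). split; [|lia].
    apply (last_state_converges Hx i _ Hlast). intros j Hj. apply Hunsat. lia.
  - exists c. split; [apply Hunsat; lia|]. intros _. apply Rabs_le_inv, Hcs.
Qed.
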